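(* Let $F=\frac19\begin{pmatrix}1&1&1\\1&1&1\\1&1&1\end{pmatrix}$ (box blur filter). Then the equation $F*X=B$ with the periodic boundary condition, for unknown $X\in\mathbb{R}^{m\times n}$, has a unique solution for every $B\in\mathbb{R}^{m\times n}$ if and only if $m,n\notin\{3l: l\in\mathbb{N}\}$.
   Context: $\mathbb{N}=\{1,2,3,\dots\}$. For $F=[f_{ij}]\in\mathbb{R}^{3\times3}$ and $X=[x_{ij}]\in\mathbb{R}^{m\times n}$, the convolution $F*X\in\mathbb{R}^{m\times n}$ is defined by $[F*X]_{ij}=\sum_{l_1=1}^3\sum_{l_2=1}^3 f_{l_1l_2}\,x_{i-l_1+2,\,j-l_2+2}$ for $1\le i\le m$, $1\le j\le n$, where the periodic boundary condition sets $x_{0j}=x_{mj}$, $x_{m+1,j}=x_{1j}$, $x_{i0}=x_{in}$, $x_{i,n+1}=x_{i1}$ (for all indices $i\in\{0,\dots,m+1\}$, $j\in\{0,\dots,n+1\}$, so corners are also determined, e.g. $x_{00}=x_{mn}$). *)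

From mathcomp Require Import all_boot all_order all_algebra.
From mathcomp Require Import reals.
Set Implicit Arguments. Unset Strict Implicit. Unset Printing Implicit Defensive.
Import Order.TTheory GRing.Theory Num.Theory.
Local Open Scope ring_scope.

(* With 0-based indices i in 'I_m, j in 'I_n, l1 l2 in 'I_3, the paper's
   x_{i-l1+2, j-l2+2} (1-based, periodic) becomes the entry at row
   (i + m + 1 - l1) mod m and column (j + n + 1 - l2) mod n. *)
Definition periodic_conv (R : pzRingType) (m n : nat) (F : 'M[R]_3)
  (X : 'M[R]_(m.+1, n.+1)) : 'M[R]_(m.+1, n.+1) :=
  \matrix_(i < m.+1, j < n.+1)
    \sum_(l1 < 3) \sum_(l2 < 3)
      F l1 l2 * X (inord ((i + m.+1 + 1 - l1) %% m.+1))
                  (inord ((j + n.+1 + 1 - l2) %% n.+1)).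

Definition box_blur (R : fieldType) : 'M[R]_3 := \matrix_(i, j) (9%:R)^-1.

(** The periodic box blur acts on X as (1/9) C_m X C_n^T, where C_k is the
    k x k circulant matrix with ones on the diagonal and on the two cyclic
    off-diagonals, so the equation is uniquely solvable for every B exactly
    when C_m and C_n are invertible.  A vector v lies in the kernel of C_k
    iff its periodic extension w satisfies w(i) + w(i+1) + w(i+2) = 0 for all
    i, which forces period 3.  When 3 divides k the pattern 1, -1, 0, 1, -1, 0,
    ... is such a nonzero vector; otherwise w has both period 3 and a period
    prime to 3, so it is constant, and 3 w(0) = 0 gives w = 0. *)

From mathcomp Require Import all_boot all_order all_algebra.
From mathcomp Require Import reals.
From mathcomp Require Import zify ring.
Set Implicit Arguments. Unset Strict Implicit. Unset Printing Implicit Defensive.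
Import Order.TTheory GRing.Theory Num.Theory.
Local Open Scope ring_scope.

Section PeriodicSequences.

Variable T : Type.
Implicit Types (w : nat -> T) (p : nat).

Definition periodic w p := forall k, w (k + p)%N = w k.

Lemma periodicM w p : periodic w p -> forall k t, w (k + t * p)%N = w k.
Proof.
move=> hw k; elim=> [|t IH]; first by rewrite mul0n addn0.
by rewrite mulSn addnA addnAC hw IH.
Qed.

Lemma periodic_modn w p : periodic w p -> forall k, w (k %% p)%N = w k.
Proof. by move=> hw k; rewrite [in RHS](divn_eq k p) addnC periodicM. Qed.

Lemma periodic_modn_period w a b :
  periodic w a -> periodic w b -> periodic w (b %% a)%N.
Proof.
move=> ha hb k.
by rewrite -(periodicM ha _ (b %/ a)) -addnA [X in (k + X)%N]addnC -divn_eq hb.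
Qed.

Lemma periodic_coprime3 w p :
  ~~ (3 %| p)%N -> periodic w 3 -> periodic w p -> periodic w 1.
Proof.
move=> p3 h3 hp; have hr := periodic_modn_period h3 hp.
have [r1 | r2] : (p %% 3 = 1 \/ p %% 3 = 2)%N by move: p3; rewrite /dvdn; lia.
- by rewrite -r1.
- by rewrite r2 in hr; exact: periodic_modn_period hr h3.
Qed.

Lemma periodic1_const w : periodic w 1 -> forall k, w k = w 0%N.
Proof. by move=> hw; elim=> [|k IH] //; rewrite -addn1 hw. Qed.

End PeriodicSequences.

Lemma sum3_periodic (V : zmodType) (w : nat -> V) :
  (forall k, w k + w k.+1 + w k.+2 = 0) -> periodic w 3.
Proof.
move=> hs k.
have /eqP -> : w k == - (w k.+1 + w k.+2) by rewrite -addr_eq0 addrA hs.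
by apply/eqP; rewrite addn3 -addr_eq0 addrC hs.
Qed.

Section BlurMatrix.

Variable R : pzRingType.

(* The index (i + 1 - l) mod (m + 1); adding [m.+1] first keeps the nat
   subtraction from truncating. *)
Definition blur_index m (i l : nat) : 'I_m.+1 := inord ((i + m.+1 + 1 - l) %% m.+1).

Definition blur_mx m : 'M[R]_m.+1 :=
  \matrix_(i, k) \sum_(l < 3) (k == blur_index m i l)%:R.

Lemma mul_blur_mx m p (X : 'M[R]_(m.+1, p)) i j :
  (blur_mx m *m X) i j = \sum_(l < 3) X (blur_index m i l) j.
Proof.
rewrite mxE; under eq_bigr do rewrite mxE mulr_suml.
rewrite exchange_big /=; apply: eq_bigr => l _.
under eq_bigr do rewrite mulr_natl mulrb.
by rewrite -big_mkcond big_pred1_eq.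
Qed.

Lemma mul_blur_mx_col m (w : nat -> R) : periodic w m.+1 -> forall k,
  (blur_mx m *m \col_(i < m.+1) w i) (inord (k.+1 %% m.+1)) 0
  = w k + w k.+1 + w k.+2.
Proof.
move=> hw k; rewrite mul_blur_mx !big_ord_recr big_ord0 /= add0r.
rewrite !mxE !inordK ?ltn_pmod // !(periodic_modn hw).
have shift l : (l <= 2)%N -> w (k.+1 %% m.+1 + m.+1 + 1 - l)%N = w (k + 2 - l)%N.
  move=> hl; rewrite -(periodicM hw _ (k.+1 %/ m.+1)) -[RHS]hw; congr w.
  by have := divn_eq k.+1 m.+1; lia.
rewrite !shift // subn0 addnK addn2 subn1 /=.
by rewrite [LHS]addrC [w k.+2 + _]addrC addrA.
Qed.

Lemma blur_mx_col_eq0 m (w : nat -> R) : periodic w m.+1 ->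
  blur_mx m *m \col_(i < m.+1) w i = 0 <-> forall k, w k + w k.+1 + w k.+2 = 0.
Proof.
move=> hw; split=> [h0 k | hs].
  by rewrite -(mul_blur_mx_col hw) h0 mxE.
apply/matrixP => i j; rewrite ord1 [RHS]mxE.
have -> : i = inord ((i + m).+1 %% m.+1) by rewrite -addnS modnDr modn_small ?inord_val.
by rewrite (mul_blur_mx_col hw).
Qed.

End BlurMatrix.

Lemma periodic_conv_box_blur (F : fieldType) m n (X : 'M[F]_(m.+1, n.+1)) :
  periodic_conv (box_blur F) X
  = (9%:R^-1 *: blur_mx F m) *m X *m (blur_mx F n)^T.
Proof.
apply/matrixP => i j.
have mul_tr (M : 'M[F]_(m.+1, n.+1)) :
    (M *m (blur_mx F n)^T) i j = (blur_mx F n *m M^T) j i.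
  by rewrite -{1}[M]trmxK -trmx_mul mxE.
rewrite mul_tr mul_blur_mx.
under [RHS]eq_bigr do rewrite mxE -scalemxAl mxE mul_blur_mx.
rewrite -mulr_sumr exchange_big mxE /= mulr_sumr.
by apply: eq_bigr => l1 _; rewrite mulr_sumr; apply: eq_bigr => l2 _; rewrite mxE.
Qed.

Lemma eq_unique_solvable (T U : Type) (f g : T -> U) : f =1 g ->
  (forall b, exists! x, f x = b) -> forall b, exists! x, g x = b.
Proof.
move=> fg f_bij b; have [x [<- x_uniq]] := f_bij b.
by exists x; split=> [|y]; rewrite -!fg //; apply: x_uniq.
Qed.

Lemma unitmx_of_col_inj (F : fieldType) n (A : 'M[F]_n) :
  (forall v : 'cV[F]_n, A *m v = 0 -> v = 0) -> A \in unitmx.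
Proof.
move=> inj; rewrite -row_full_unit -cokermx_eq0; apply/eqP/matrixP => i j.
have := inj (cokermx A *m delta_mx j 0).
rewrite mulmxA mulmx_coker mul0mx -colE => /(_ erefl) /matrixP /(_ i 0).
by rewrite !mxE.
Qed.

Lemma mulmx2_inj_unitl (F : fieldType) m n p (A : 'M[F]_m) (C : 'M[F]_(n.+1, p)) :
  (forall X : 'M[F]_(m, n.+1), A *m X *m C = 0 -> X = 0) -> A \in unitmx.
Proof.
move=> inj; apply: unitmx_of_col_inj => v Av0.
have := inj (v *m const_mx 1); rewrite mulmxA Av0 !mul0mx => /(_ erefl) /matrixP h.
apply/matrixP => i j; have := h i 0; rewrite ord1 !mxE big_ord1 !mxE.
by rewrite mulr1.
Qed.

Lemma mulmx2_bijP (F : fieldType) m n (A : 'M[F]_m.+1) (C : 'M[F]_n.+1) :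
  (forall B, exists! X, A *m X *m C = B) <-> A \in unitmx /\ C \in unitmx.
Proof.
split=> [solvable | [uA uC] B].
  have inj X : A *m X *m C = 0 -> X = 0.
    have [X0 [_ uniq0]] := solvable 0.
    by move=> hX; rewrite -(uniq0 _ hX) (uniq0 0) // mulmx0 mul0mx.
  split; first exact: mulmx2_inj_unitl inj.
  rewrite -unitmx_tr; apply: (mulmx2_inj_unitl (C := A^T)) => X hX.
  rewrite -[X]trmxK (inj X^T) ?trmx0 //; apply: trmx_inj.
  by rewrite !trmx_mul trmxK mulmxA hX trmx0.
exists (invmx A *m B *m invmx C); split.
  by rewrite !mulmxA mulmxV // mul1mx -mulmxA mulVmx // mulmx1.
by move=> X <-; rewrite !mulmxA mulVmx // mul1mx mulmxK.
Qed.

Lemma unitmx_blur (F : fieldType) m : (3%:R : F) != 0 ->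
  (blur_mx F m \in unitmx) = ~~ (3 %| m.+1)%N.
Proof.
move=> nz3; have [d3 | nd3] := boolP (3 %| m.+1)%N.
- pose w (k : nat) : F := (k %% 3 == 0)%N%:R - (k %% 3 == 1)%N%:R.
  have hw : periodic w m.+1 by move=> k; rewrite /w -modnDmr (eqP d3) addn0.
  have ker : blur_mx F m *m \col_i w i = 0.
    apply/blur_mx_col_eq0 => // k; rewrite /w -[k.+2]addn2 -[k.+1]addn1 -!(modnDml k).
    have k3 : (k %% 3 = 0 \/ k %% 3 = 1 \/ k %% 3 = 2)%N by lia.
    by case: k3 => [->|[->|->]] /=; ring.
  apply/negbTE/negP => uA.
  have := congr1 (mulmx (invmx (blur_mx F m))) ker.
  rewrite mulKmx // mulmx0 => /matrixP /(_ 0 0).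
  by rewrite !mxE /w mod0n /= subr0 => /eqP; rewrite oner_eq0.
- apply: unitmx_of_col_inj => v hv.
  pose w (k : nat) : F := v (inord (k %% m.+1)%N) 0.
  have hw : periodic w m.+1 by move=> k; rewrite /w modnDr.
  have ev : v = \col_i w i.
    by apply/matrixP => i j; rewrite ord1 mxE /w modn_small ?inord_val.
  have sum3 k : w k + w k.+1 + w k.+2 = 0.
    by move: k; apply/(blur_mx_col_eq0 hw); rewrite -ev.
  have cst := periodic1_const (periodic_coprime3 nd3 (sum3_periodic sum3) hw).
  have w0 : w 0%N = 0.
    have : w 0%N * 3%:R = 0 by rewrite -(sum3 0%N) !cst; ring.
    by move/eqP; rewrite mulf_eq0 (negbTE nz3) orbF => /eqP.
  by rewrite ev; apply/matrixP => i j; rewrite !mxE cst w0.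
Qed.

Lemma box_blur_solvableP (F : fieldType) m n : (3%:R : F) != 0 ->
  (forall B : 'M[F]_(m.+1, n.+1),
     exists! X : 'M[F]_(m.+1, n.+1), periodic_conv (box_blur F) X = B)
  <-> (~ (3 %| m.+1)%N /\ ~ (3 %| n.+1)%N).
Proof.
move=> nz3; have nz9 : (9%:R : F) != 0 by rewrite (natrM F 3 3) mulf_neq0.
transitivity (9%:R^-1 *: blur_mx F m \in unitmx /\ (blur_mx F n)^T \in unitmx).
  rewrite -mulmx2_bijP.
  by split; apply: eq_unique_solvable => X; rewrite periodic_conv_box_blur.
rewrite unitmxZ ?unitfE ?invr_eq0 // unitmx_tr !unitmx_blur //.
by split=> -[/negP ? /negP ?].
Qed.

Theorem corollary2 (R : realType) (m n : nat) :
  (forall B : 'M[R]_(m.+1, n.+1),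
     exists! X : 'M[R]_(m.+1, n.+1), periodic_conv (box_blur R) X = B)
  <-> (~ (3 %| m.+1)%N /\ ~ (3 %| n.+1)%N).
Proof. by apply: box_blur_solvableP; rewrite pnatr_eq0. Qed.
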